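(* If $C$ is a self-dual code over $\mathbb{Z}_4+u\mathbb{Z}_4$ generated by a matrix of the form $[I_n\,|\,A]$ (with $A$ an $n\times n$ matrix over $\mathbb{Z}_4+u\mathbb{Z}_4$), then $\mu(C)$ is self-dual over $\mathbb{Z}_4$ and $\alpha(C)$ is self-dual over $\mathbb{F}_2+u\mathbb{F}_2$.
   Context: $\mathbb{Z}_4+u\mathbb{Z}_4$ is the commutative ring of characteristic $4$ with $u^2=0$; $\mathbb{F}_2+u\mathbb{F}_2$ is the commutative ring $\{0,1,u,1+u\}$ of characteristic $2$ with $u^2=0$. A linear code over a ring $R$ is an $R$-submodule of $R^N$; duals are taken with respect to the Euclidean inner product $\sum_i x_iy_i$ in $R$; self-dual means $C=C^\perp$. For $\overline{a},\overline{b}\in\mathbb{Z}_4^N$, $\mu(\overline{a}+u\overline{b})=\overline{a}$; $\alpha$ is coordinatewise reduction modulo $2$ from $\mathbb{Z}_4+u\mathbb{Z}_4$ to $\mathbb{F}_2+u\mathbb{F}_2$. *)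

From HB Require Import structures.
From mathcomp Require Import all_boot all_order all_algebra.
Set Implicit Arguments. Unset Strict Implicit. Unset Printing Implicit Defensive.
Import Order.TTheory GRing.Theory.
Local Open Scope ring_scope.

(* The ring R + uR with u^2 = 0 (dual numbers over R):
   an element is  re + u * du. *)
Record dnum (R : Type) := DNum { dre : R; ddu : R }.
Arguments DNum {R}.

Definition dnum_to_pair (R : Type) (x : dnum R) : R * R := (dre x, ddu x).
Definition dnum_of_pair (R : Type) (p : R * R) : dnum R := DNum p.1 p.2.
Lemma dnum_pairK (R : Type) : cancel (@dnum_to_pair R) (@dnum_of_pair R).
Proof. by case. Qed.

HB.instance Definition _ (R : choiceType) :=
  Choice.copy (dnum R) (can_type (@dnum_pairK R)).
HB.instance Definition _ (R : countType) :=
  Countable.copy (dnum R) (can_type (@dnum_pairK R)).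
HB.instance Definition _ (R : finType) :=
  Finite.copy (dnum R) (can_type (@dnum_pairK R)).

Section DnumRing.
Variable R : comNzRingType.
Implicit Types x y z : dnum R.

Definition dzero : dnum R := DNum 0 0.
Definition dopp x : dnum R := DNum (- dre x) (- ddu x).
Definition dadd x y : dnum R := DNum (dre x + dre y) (ddu x + ddu y).
Definition done : dnum R := DNum 1 0.
(* (a + u b)(c + u d) = ac + u (ad + bc) *)
Definition dmul x y : dnum R :=
  DNum (dre x * dre y) (dre x * ddu y + ddu x * dre y).

Lemma daddA : associative dadd.
Proof. by move=> [a b] [c d] [e f]; rewrite /dadd /= !addrA. Qed.
Lemma daddC : commutative dadd.
Proof. by move=> [a b] [c d]; rewrite /dadd /= (addrC a) (addrC b). Qed.
Lemma dadd0 : left_id dzero dadd.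
Proof. by move=> [a b]; rewrite /dadd /= !add0r. Qed.
Lemma daddN : left_inverse dzero dopp dadd.
Proof. by move=> [a b]; rewrite /dadd /= !addNr. Qed.

HB.instance Definition _ := GRing.isZmodule.Build (dnum R) daddA daddC dadd0 daddN.

Lemma dmulA : associative dmul.
Proof.
move=> [a b] [c d] [e f]; rewrite /dmul /=; congr DNum; first by rewrite mulrA.
by rewrite !mulrDr !mulrDl !mulrA addrA.
Qed.
Lemma dmulC : commutative dmul.
Proof.
by move=> [a b] [c d]; rewrite /dmul /= mulrC addrC (mulrC a d) (mulrC b c).
Qed.
Lemma dmul1 : left_id done dmul.
Proof. by move=> [a b]; rewrite /dmul /= !mul1r mul0r addr0. Qed.
Lemma dmulDl : left_distributive dmul dadd.
Proof.
move=> [a b] [c d] [e f]; rewrite /dmul /dadd /=; congr DNum; first by rewrite mulrDl.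
by rewrite !mulrDl addrACA.
Qed.
Lemma done_neq0 : done != dzero.
Proof. by apply/negP => /eqP[] /eqP; rewrite oner_eq0. Qed.

HB.instance Definition _ :=
  GRing.Zmodule_isComNzRing.Build (dnum R) dmulA dmulC dmul1 dmulDl done_neq0.
End DnumRing.

Definition Z4u := dnum 'Z_4.
HB.instance Definition _ := Finite.on Z4u.
HB.instance Definition _ := GRing.ComNzRing.on Z4u.
Definition F2u := dnum 'Z_2.
HB.instance Definition _ := Finite.on F2u.
HB.instance Definition _ := GRing.ComNzRing.on F2u.

Section Codes.
Variable R : finComNzRingType.
Variable N : nat.

Definition eucl (x y : 'rV[R]_N) : R := \sum_(i < N) x 0 i * y 0 i.

Definition dual_code (C : {set 'rV[R]_N}) : {set 'rV[R]_N} :=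
  [set y | [forall x in C, eucl x y == 0]].

Definition self_dual (C : {set 'rV[R]_N}) : Prop := C = dual_code C.
End Codes.

Definition gen_code (R : finComNzRingType) (k N : nat) (G : 'M[R]_(k, N))
  : {set 'rV[R]_N} := [set v *m G | v : 'rV[R]_k].

Definition mu_code (N : nat) (C : {set 'rV[Z4u]_N}) : {set 'rV['Z_4]_N} :=
  [set map_mx (@dre _) c | c in C].

Definition red2 (a : 'Z_4) : 'Z_2 := inZp (nat_of_ord a).
Definition alpha_elt (z : Z4u) : F2u := DNum (red2 (dre z)) (red2 (ddu z)).
Definition alpha_code (N : nat) (C : {set 'rV[Z4u]_N}) : {set 'rV[F2u]_N} :=
  [set map_mx alpha_elt c | c in C].

(* A code generated by [I | B] is self-dual exactly when B B^T = -I.  A ring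
   morphism with a right inverse maps such a code onto the code generated by
   the image [I | f(B)], and preserves B B^T = -I.  Both mu (taking the real
   part) and alpha (reduction mod 2 of both parts) are such morphisms. *)
From HB Require Import structures.
From mathcomp Require Import all_boot all_order all_algebra.
Local Open Scope ring_scope.
Set Implicit Arguments. Unset Strict Implicit. Unset Printing Implicit Defensive.
Import GRing.Theory.

Section SelfDualSystematic.
Variable R : finComNzRingType.

Lemma euclE N (x y : 'rV[R]_N) : eucl x y = (x *m y^T) 0 0.
Proof. by rewrite /eucl !mxE; apply: eq_bigr => j _; rewrite mxE. Qed.

Lemma mem_gen_code k N (G : 'M[R]_(k, N)) v : v *m G \in gen_code G.
Proof. exact: imset_f. Qed.

Lemma in_dual_gen_code k N (G : 'M[R]_(k, N)) y :
  (y \in dual_code (gen_code G)) = (G *m y^T == 0).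
Proof.
apply/idP/eqP => [| GyT0].
  rewrite inE => /forall_inP y_orth; apply/matrixP => i j; rewrite [j]ord1.
  move/eqP: (y_orth _ (mem_gen_code G (delta_mx 0 i))).
  by rewrite euclE -mulmxA -rowE !mxE.
rewrite inE; apply/forall_inP => _ /imsetP[v _ ->].
by rewrite euclE -mulmxA GyT0 mulmx0 mxE.
Qed.

Lemma gen_code_sub_dual k N (G : 'M[R]_(k, N)) :
  (gen_code G \subset dual_code (gen_code G)) = (G *m G^T == 0).
Proof.
apply/subsetP/eqP => [sub_dual | GGt0].
  apply/matrixP => j i; have := sub_dual _ (mem_gen_code G (delta_mx 0 i)).
  rewrite in_dual_gen_code trmx_mul trmx_delta mulmxA -colE => /eqP/matrixP.
  by move=> /(_ j 0); rewrite !mxE.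
by move=> _ /imsetP[v _ ->]; rewrite in_dual_gen_code trmx_mul mulmxA GGt0 mul0mx.
Qed.

Lemma mul_std_gen_tr n (B : 'M[R]_n) :
  row_mx 1%:M B *m (row_mx 1%:M B)^T = 1%:M + B *m B^T.
Proof. by rewrite tr_row_mx mul_row_col trmx1 mulmx1. Qed.

Lemma self_dual_std_gen_codeP n (B : 'M[R]_n) :
  self_dual (gen_code (row_mx 1%:M B)) <-> B *m B^T = - 1%:M.
Proof.
set G := row_mx 1%:M B.
have sub_dualE : (gen_code G \subset dual_code (gen_code G)) = (B *m B^T == - 1%:M).
  by rewrite gen_code_sub_dual mul_std_gen_tr addrC addr_eq0.
split=> [sd | BBt].
  by apply/eqP; rewrite -sub_dualE -sd.
have BtB : B^T *m B = - 1%:M.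
  have /mulmx1C : B *m - B^T = 1%:M by rewrite mulmxN BBt opprK.
  by rewrite mulNmx => /eqP; rewrite eqr_oppLR => /eqP.
apply/eqP; rewrite eqEsubset sub_dualE BBt eqxx /=; apply/subsetP => y.
rewrite in_dual_gen_code -[y]hsubmxK /G !tr_row_mx mul_row_col mul1mx.
rewrite addr_eq0 => /eqP lT; apply/imsetP; exists (lsubmx y) => //.
rewrite mul_mx_row mulmx1 -[lsubmx y]trmxK lT; congr row_mx.
by rewrite linearN /= trmx_mul trmxK mulNmx -mulmxA BtB mulmxN mulmx1 opprK.
Qed.
End SelfDualSystematic.

Section MapCode.
Variables (R S : finComNzRingType) (f : {rmorphism R -> S}) (g : S -> R).
Hypothesis fK : cancel g f.

Lemma map_gen_code k N (G : 'M[R]_(k, N)) :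
  [set map_mx f c | c in gen_code G] = gen_code (map_mx f G).
Proof.
apply/setP => y; apply/imsetP/imsetP => [[_ /imsetP[v _ ->] ->] | [v _ ->]].
  by exists (map_mx f v); rewrite ?map_mxM.
exists (map_mx g v *m G); first exact: mem_gen_code.
by rewrite map_mxM; congr (_ *m _); apply/matrixP => i j; rewrite !mxE fK.
Qed.

Lemma map_self_dual_std_gen_code n (B : 'M[R]_n) :
  self_dual (gen_code (row_mx 1%:M B)) ->
  self_dual [set map_mx f c | c in gen_code (row_mx 1%:M B)].
Proof.
move=> /self_dual_std_gen_codeP BBt.
rewrite map_gen_code map_row_mx map_mx1; apply/self_dual_std_gen_codeP.
by rewrite map_trmx -map_mxM BBt map_mxN map_mx1.
Qed.
End MapCode.

Definition dnum_map (T U : Type) (h : T -> U) (x : dnum T) : dnum U :=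
  DNum (h (dre x)) (h (ddu x)).

Lemma dnum_mapK (T U : Type) (h : T -> U) (h' : U -> T) :
  cancel h' h -> cancel (dnum_map h') (dnum_map h).
Proof. by move=> hK [a b]; rewrite /dnum_map /= !hK. Qed.

Section DualNumberMorphisms.
Variables R S : comNzRingType.

Lemma dre_is_zmod_morphism : zmod_morphism (@dre R).
Proof. by []. Qed.

Lemma dre_is_monoid_morphism : monoid_morphism (@dre R).
Proof. by []. Qed.

HB.instance Definition _ := GRing.isZmodMorphism.Build (dnum R) R (@dre R)
  dre_is_zmod_morphism.
HB.instance Definition _ := GRing.isMonoidMorphism.Build (dnum R) R (@dre R)
  dre_is_monoid_morphism.

Lemma dreK : cancel (fun a : R => DNum a 0) (@dre R).
Proof. by []. Qed.

Variable h : {rmorphism R -> S}.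

Lemma dnum_map_is_zmod_morphism : zmod_morphism (dnum_map h).
Proof. by move=> [a b] [c d]; rewrite /dnum_map /= !rmorphB. Qed.

Lemma dnum_map_is_monoid_morphism : monoid_morphism (dnum_map h).
Proof.
split=> [| [a b] [c d]]; first by rewrite /dnum_map /= rmorph1 rmorph0.
by rewrite /dnum_map /= rmorphD !rmorphM.
Qed.

HB.instance Definition _ := GRing.isZmodMorphism.Build (dnum R) (dnum S)
  (dnum_map h) dnum_map_is_zmod_morphism.
HB.instance Definition _ := GRing.isMonoidMorphism.Build (dnum R) (dnum S)
  (dnum_map h) dnum_map_is_monoid_morphism.
End DualNumberMorphisms.

Lemma red2_is_zmod_morphism : zmod_morphism red2.
Proof. by move=> [[|[|[|[|x]]]] ?] [[|[|[|[|y]]]] ?] //=; apply/val_inj. Qed.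

Lemma red2_is_monoid_morphism : monoid_morphism red2.
Proof.
split; first exact/val_inj.
by move=> [[|[|[|[|x]]]] ?] [[|[|[|[|y]]]] ?] //=; apply/val_inj.
Qed.

HB.instance Definition _ := GRing.isZmodMorphism.Build 'Z_4 'Z_2 red2
  red2_is_zmod_morphism.
HB.instance Definition _ := GRing.isMonoidMorphism.Build 'Z_4 'Z_2 red2
  red2_is_monoid_morphism.

Lemma red2K : cancel (fun a : 'Z_2 => inZp a : 'Z_4) red2.
Proof. by move=> [[|[|a]] ?] //=; apply/val_inj. Qed.

Theorem corollary4p5 (n : nat) (A : 'M[Z4u]_n) :
  self_dual (gen_code (row_mx 1%:M A)) ->
  self_dual (mu_code (gen_code (row_mx 1%:M A))) /\
  self_dual (alpha_code (gen_code (row_mx 1%:M A))).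
Proof.
move=> sd; split.
  exact: (@map_self_dual_std_gen_code Z4u 'Z_4 _ _ (@dreK _) _ _ sd).
(* [alpha_elt] is [dnum_map red2] by conversion. *)
exact: (@map_self_dual_std_gen_code Z4u F2u _ _ (dnum_mapK red2K) _ _ sd).
Qed.
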